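(* Let $q(x)$ be a multilinear polynomial over $\mathbb{R}^n$ of degree at most $d$ with $\mathrm{sparsity}(q)=T$. Then for $\mathbf{x}$ uniformly distributed on $\{0,1\}^n$, the random variable $q(\mathbf{x})$ takes at least $\frac{1}{2d^2}\log(T)-2$ distinct output values.
   Context: A multilinear polynomial of degree at most $d$ is $q(x)=\sum_{|S|\le d}\widehat{q}(S)\prod_{i\in S}x_i$; $\mathrm{sparsity}(q)$ is its number of nonzero coefficients. $\log$ denotes the logarithm to base $2$. *)

From mathcomp Require Import all_boot all_order all_algebra.
From mathcomp Require Import reals exp.
Set Implicit Arguments. Unset Strict Implicit. Unset Printing Implicit Defensive.
Import Order.TTheory GRing.Theory Num.Theory.
Local Open Scope ring_scope.

(* A multilinear polynomial over R in n variables, given by its coefficient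
   function S |-> \hat q(S) on subsets S of {0,...,n-1}. *)
Definition mlpoly (R : realType) (n : nat) := {ffun {set 'I_n} -> R}.

Definition deg_le (R : realType) (n : nat) (q : mlpoly R n) (d : nat) : Prop :=
  forall S : {set 'I_n}, q S != 0 -> (#|S| <= d)%N.

Definition sparsity (R : realType) (n : nat) (q : mlpoly R n) : nat :=
  #|[set S : {set 'I_n} | q S != 0]|.

Definition ml_eval (R : realType) (n : nat) (q : mlpoly R n)
    (x : {ffun 'I_n -> bool}) : R :=
  \sum_(S : {set 'I_n}) q S * \prod_(i in S) (x i)%:R.

(* number of distinct values of q(x) as x ranges over {0,1}^n
   (= size of the support of q(x) for x uniform on {0,1}^n) *)
Definition num_values (R : realType) (n : nat) (q : mlpoly R n) : nat :=
  size (undup [seq ml_eval q x | x <- enum {: {ffun 'I_n -> bool}}]).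

Definition log2 (R : realType) (x : R) : R := ln x / ln 2.

From mathcomp Require Import all_boot all_order all_algebra.
From mathcomp Require Import reals exp.
From mathcomp Require Import ring zify.
Import Order.TTheory GRing.Theory Num.Theory.
Local Open Scope ring_scope.

Set Implicit Arguments. Unset Strict Implicit. Unset Printing Implicit Defensive.

(* Let k be the number of values of q on the cube {0,1}^n. For each value v, the
   Lagrange polynomial prod_{u <> v} (q - u) / (v - u) is the indicator of the level
   set {q = v} and has Fourier degree at most d(k-1), so its total influence is at
   most 4d(k-1) 2^n; summing over the k values, the pairs (x, i) such that flipping
   x_i changes q(x) number at most 4dk(k-1) 2^n.
   Conversely, let i occur in q and let M be an inclusion-maximal monomial of q
   containing i. On each subcube obtained by fixing the coordinates outside M, the
   alternating sum of q is +-q(M) <> 0, so some edge of direction i inside it changes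
   q; hence at least 2^(n-d) points x are sensitive to i. Therefore q involves at
   most 2^d 4dk(k-1) variables, so it has at most (2^d 4dk(k-1) + 1)^d monomials,
   and taking logarithms gives log T <= 2d^2 (k + 2). *)

Lemma sum_eq0_antiinvolution (R : numDomainType) (T : finType) (P : pred T)
    (f : T -> R) (s : T -> T) :
  involutive s -> (forall x, P (s x) = P x) ->
  (forall x, P x -> f (s x) = - f x) -> \sum_(x | P x) f x = 0.
Proof.
move=> sK Ps fsN; apply/eqP; rewrite -eqNr -sumrN (reindex_inj (can_inj sK)) /=.
by apply/eqP/eq_big => [x | x]; rewrite Ps // => /fsN ->; rewrite opprK.
Qed.

Section SymmetricDifference.
Variable T : finType.
Implicit Types A B : {set T}.

Definition symdiff A B : {set T} := [set x | (x \in A) (+) (x \in B)].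

Lemma in_symdiff A B x : (x \in symdiff A B) = (x \in A) (+) (x \in B).
Proof. by rewrite inE. Qed.

Lemma symdiffK A B : symdiff A (symdiff A B) = B.
Proof. by apply/setP => x; rewrite !in_symdiff addKb. Qed.

Lemma symdiffKr A B : symdiff (symdiff A B) B = A.
Proof. by apply/setP => x; rewrite !in_symdiff addbK. Qed.

Lemma inj_symdiff A : injective (symdiff A).
Proof. exact: can_inj (symdiffK A). Qed.

Lemma symdiff_eq0 A B : (symdiff A B == set0) = (A == B).
Proof.
apply/eqP/eqP => [/setP AB | ->]; apply/setP => x; last by rewrite in_symdiff inE addbb.
by move: (AB x); rewrite in_symdiff inE; case: (x \in A); case: (x \in B).
Qed.

Lemma symdiff1_subset A B x : x \in B ->
  (symdiff A [set x] \subset B) = (A \subset B).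
Proof.
move=> xB; apply/subsetP/subsetP => AB y; move: (AB y); rewrite !in_symdiff inE;
  by case: eqP => [-> | _]; rewrite ?addbF ?addbT.
Qed.

Lemma subset_symdiff1 A B x : x \notin A ->
  (A \subset symdiff B [set x]) = (A \subset B).
Proof.
move=> xA; apply/subsetP/subsetP => AB y yA; move: (AB y yA);
  rewrite !in_symdiff inE; case: eqP => [yx | _]; rewrite ?addbF //.
all: by move: xA; rewrite -yx yA.
Qed.

Lemma setU_symdiff1 A B x : x \notin A ->
  A :|: symdiff B [set x] = symdiff (A :|: B) [set x].
Proof.
move=> xA; apply/setP => y; rewrite !inE; case: eqP => [-> | _]; rewrite ?addbF //.
by rewrite (negPf xA).
Qed.

Lemma sign_symdiff1 (R : pzRingType) A x :
  (-1) ^+ #|symdiff A [set x]| = - (-1) ^+ #|A| :> R.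
Proof.
have [xA | xA] := boolP (x \in A).
  have -> : symdiff A [set x] = A :\ x.
    by apply/setP => y; rewrite !inE; case: eqP => [-> | _]; rewrite ?xA ?addbF ?andbT.
  by rewrite (cardsD1 x A) xA exprS mulN1r opprK.
have -> : symdiff A [set x] = x |: A.
  by apply/setP => y; rewrite !inE; case: eqP => [-> | _]; rewrite ?(negPf xA) ?addbF.
by rewrite cardsU1 xA exprS mulN1r.
Qed.

End SymmetricDifference.

Lemma prod_nat_mem (R : comPzSemiRingType) (T : finType) (A B : {set T}) :
  \prod_(x in A) (x \in B)%:R = (A \subset B)%:R :> R.
Proof.
have [/subsetP AB | /subsetPn [x xA xB]] := boolP (A \subset B).
  by rewrite big1 // => x /AB ->.
by rewrite (bigD1 x xA) /= (negPf xB) mul0r.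
Qed.

Lemma sum_alternating_subsets (R : numDomainType) (T : finType) (M S Z : {set T}) :
  [disjoint Z & M] ->
  \sum_(B : {set T} | B \subset M) (-1) ^+ #|B| * (S \subset Z :|: B)%:R =
    (if M \subset S then (-1) ^+ #|M| * (S \subset Z :|: M)%:R else 0) :> R.
Proof.
move=> ZM; have [MS | /subsetPn [j jM jS]] := boolP (M \subset S).
  rewrite (bigD1 M) //= big1 ?addr0 // => B /andP [BM /negP BneM].
  case: (boolP (S \subset Z :|: B)) => [SZB | _]; last by rewrite mulr0.
  case: BneM; rewrite eqEsubset BM; apply/subsetP => x xM.
  by have := subsetP (subset_trans MS SZB) x xM; rewrite inE (disjointFl ZM xM).
have jZ : j \notin Z by rewrite (disjointFl ZM jM).
apply: (sum_eq0_antiinvolution (s := fun B => symdiff B [set j])) => [B | B | B _].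
- exact: symdiffKr.
- exact: symdiff1_subset.
by rewrite sign_symdiff1 setU_symdiff1 // subset_symdiff1 // mulNr.
Qed.

Lemma card_small_subsets_le (T : finType) (V : {set T}) d (F : {set {set T}}) :
  (forall S, S \in F -> S \subset V /\ (#|S| <= d)%N) -> (#|F| <= #|V|.+1 ^ d)%N.
Proof.
move=> F_small.
(* Each S in F is the set of entries of a d-tuple over option T listing its elements
   and padded with None. *)
pose Vo : {set option T} := None |: (Some @: V).
pose elems (t : {ffun 'I_d -> option T}) := [set x | [exists j, t j == Some x]].
have card_Vo : #|Vo| = #|V|.+1.
  rewrite cardsU1 card_imset; last exact: Some_inj.
  suff -> : None \notin Some @: V by [].
  by apply/imsetP => -[].
have F_sub : F \subset elems @: ffun_on Vo.
  apply/subsetP => S /F_small [SV Sd].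
  pose s := [seq Some x | x <- enum S].
  have size_s : size s = #|S| by rewrite size_map cardE.
  apply/imsetP; exists [ffun j : 'I_d => nth None s j].
    apply/ffun_onP => j; rewrite ffunE !inE.
    have [j_lt | j_ge] := ltnP j (size s); last by rewrite nth_default.
    have /mapP [x xS ->] := mem_nth None j_lt.
    by rewrite (imset_f Some (subsetP SV x _)) ?orbT // -mem_enum.
  apply/setP => x; rewrite inE; apply/idP/existsP => [xS | [j]].
    have xs : Some x \in s by apply: map_f; rewrite mem_enum.
    have j_lt : (index (Some x) s < d)%N by rewrite (leq_trans _ Sd) // -size_s index_mem.
    by exists (Ordinal j_lt); rewrite ffunE nth_index.
  rewrite ffunE; have [j_lt | j_ge] := ltnP j (size s); last by rewrite nth_default.
  by move/eqP=> sj; have := mem_nth None j_lt; rewrite sj (mem_map Some_inj) mem_enum.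
rewrite (leq_trans (subset_leq_card F_sub)) // (leq_trans (leq_imset_card _ _)) //.
by rewrite card_ffun_on card_Vo card_ord.
Qed.

Lemma card_set_ord n : #|{: {set 'I_n}}| = (2 ^ n)%N.
Proof. by rewrite -cardsT -powersetT card_powerset cardsT card_ord. Qed.

Section Walsh.
Variables (R : numDomainType) (n : nat).
Implicit Types S T X Y : {set 'I_n}.

Definition walsh S X : R := \prod_i (if (i \in S) && (i \in X) then -1 else 1).

Lemma walshC S X : walsh S X = walsh X S.
Proof. by apply: eq_bigr => i _; rewrite andbC. Qed.

Lemma walshM S T X : walsh S X * walsh T X = walsh (symdiff S T) X.
Proof.
rewrite -big_split; apply: eq_bigr => i _ /=; rewrite in_symdiff.
by case: (i \in S); case: (i \in T); case: (i \in X); rewrite /= ?(mulr1, mul1r, mulrNN).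
Qed.

Lemma walshMr S X Y : walsh S X * walsh S Y = walsh S (symdiff X Y).
Proof. by rewrite ![walsh S _]walshC walshM. Qed.

Lemma walsh0 X : walsh set0 X = 1.
Proof. by rewrite /walsh big1 // => i _; rewrite inE. Qed.

Lemma walsh_set1 S j : walsh S [set j] = if j \in S then -1 else 1.
Proof.
rewrite /walsh (bigD1 j) //= set11 andbT big1 ?mulr1 // => i /negPf ij.
by rewrite inE ij andbF.
Qed.

Lemma sum_walsh S : \sum_X walsh S X = if S == set0 then (2 ^ n)%:R else 0.
Proof.
have [-> | /set0Pn [j jS] /=] := eqVneq S set0.
  by under eq_bigr do rewrite walsh0; rewrite sumr_const card_set_ord.
apply: (sum_eq0_antiinvolution (s := fun X => symdiff X [set j])) => // [X | X _].
  exact: symdiffKr.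
by rewrite -walshMr walsh_set1 jS mulrN1.
Qed.

Lemma parseval (b : {set 'I_n} -> R) :
  \sum_X (\sum_S b S * walsh S X) ^+ 2 = (2 ^ n)%:R * \sum_S b S ^+ 2.
Proof.
transitivity (\sum_X \sum_S \sum_T b S * b T * walsh (symdiff S T) X).
  apply: eq_bigr => X _; rewrite expr2 mulr_suml; apply: eq_bigr => S _.
  by rewrite mulr_sumr; apply: eq_bigr => T _; rewrite -walshM; ring.
rewrite exchange_big mulr_sumr; apply: eq_bigr => S _ /=.
rewrite exchange_big (bigD1 S) //= [X in _ + X]big1 => [|T /negPf TS].
  by rewrite -mulr_sumr sum_walsh symdiff_eq0 eqxx addr0; ring.
by rewrite -mulr_sumr sum_walsh symdiff_eq0 eq_sym TS mulr0.
Qed.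

End Walsh.

Section LowDegree.
Variables (R : numDomainType) (n : nat).
Implicit Types (S T X : {set 'I_n}) (g h : {set 'I_n} -> R).

Definition low_degree D g :=
  exists2 a : {set 'I_n} -> R, (forall S, (D < #|S|)%N -> a S = 0)
    & g =1 fun X => \sum_S a S * walsh R S X.

Lemma eq_low_degree D g h : low_degree D g -> g =1 h -> low_degree D h.
Proof. by move=> [a a_deg ga] gh; exists a => // X; rewrite -gh. Qed.

Lemma low_degreeW D D' g : (D <= D')%N -> low_degree D g -> low_degree D' g.
Proof.
by move=> DD' [a a_deg ga]; exists a => // S /(leq_ltn_trans DD'); apply: a_deg.
Qed.

Lemma low_degree_walsh T : low_degree #|T| (walsh R T).
Proof.
exists (fun S => (S == T)%:R) => [S | X]; first by case: eqP => // ->; rewrite ltnn.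
by rewrite (bigD1 T) //= eqxx mul1r big1 ?addr0 // => S /negPf ->; rewrite mul0r.
Qed.

Lemma low_degree_cst D (c : R) : low_degree D (fun _ => c).
Proof.
exists (fun S => c * (S == set0)%:R) => [S | X].
  by case: eqP => [-> | _]; rewrite ?cards0 ?mulr0.
rewrite (bigD1 set0) //= eqxx walsh0 !mulr1 big1 ?addr0 // => S /negPf ->.
by rewrite !mulr0 mul0r.
Qed.

Lemma low_degreeZ D (c : R) g : low_degree D g -> low_degree D (fun X => c * g X).
Proof.
move=> [a a_deg ga]; exists (fun S => c * a S) => [S /a_deg -> | X]; first exact: mulr0.
by rewrite ga mulr_sumr; apply: eq_bigr => S _; rewrite mulrA.
Qed.

Lemma low_degreeD D g h :
  low_degree D g -> low_degree D h -> low_degree D (fun X => g X + h X).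
Proof.
move=> [a a_deg ga] [b b_deg hb]; exists (fun S => a S + b S) => [S SD | X].
  by rewrite a_deg // b_deg // addr0.
by rewrite ga hb -big_split; apply: eq_bigr => S _; rewrite mulrDl.
Qed.

Lemma low_degreeM D1 D2 g h : low_degree D1 g -> low_degree D2 h ->
  low_degree (D1 + D2) (fun X => g X * h X).
Proof.
move=> [a a_deg ga] [b b_deg hb].
exists (fun U => \sum_S a S * b (symdiff S U)) => [U UD | X].
  apply: big1 => S _.
  have U_le : (#|U| <= #|S| + #|symdiff S U|)%N.
    rewrite (leq_trans _ (leq_card_setU S (symdiff S U))) // subset_leq_card //.
    by apply/subsetP => i iU; rewrite !inE iU; case: (i \in S).
  have [/a_deg -> | SD1] := ltnP D1 #|S|; first by rewrite mul0r.
  by rewrite b_deg ?mulr0 //; lia.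
rewrite ga hb mulr_suml.
transitivity (\sum_S \sum_U a S * b (symdiff S U) * walsh R U X).
  apply: eq_bigr => S _; rewrite mulr_sumr (reindex_inj (@inj_symdiff _ S)).
  by apply: eq_bigr => U _; rewrite mulrACA walshM symdiffK.
by rewrite exchange_big; apply: eq_bigr => U _; rewrite mulr_suml.
Qed.

Lemma low_degree_sum D (I : Type) (r : seq I) (F : I -> {set 'I_n} -> R) :
  (forall i, low_degree D (F i)) -> low_degree D (fun X => \sum_(i <- r) F i X).
Proof.
move=> F_deg; elim: r => [|i r IHr].
  by apply: (eq_low_degree (low_degree_cst D 0)) => X; rewrite big_nil.
apply: (eq_low_degree (low_degreeD (F_deg i) IHr)) => X.
by rewrite big_cons.
Qed.

Lemma low_degree_prod D (I : eqType) (r : seq I) (F : I -> {set 'I_n} -> R) :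
  (forall i, i \in r -> low_degree D (F i)) ->
  low_degree (D * size r) (fun X => \prod_(i <- r) F i X).
Proof.
elim: r => [|i r IHr] F_deg.
  by apply: (eq_low_degree (low_degree_cst _ 1)) => X; rewrite big_nil.
rewrite mulnS; apply: (eq_low_degree (low_degreeM (F_deg i (mem_head i r)) (IHr _))).
  by move=> j jr; apply: F_deg; rewrite inE jr orbT.
by move=> X; rewrite big_cons.
Qed.

End LowDegree.

Arguments low_degree_cst {R n}.

Lemma total_influence_le (R : realDomainType) n D (g : {set 'I_n} -> R) :
  low_degree D g ->
  \sum_i \sum_X (g X - g (symdiff X [set i])) ^+ 2 <= 4 * D%:R * \sum_X g X ^+ 2.
Proof.
move=> [a a_deg ga].
pose da (i : 'I_n) (S : {set 'I_n}) := if i \in S then 2 * a S else 0.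
have dg i X : g X - g (symdiff X [set i]) = \sum_S da i S * walsh R S X.
  rewrite !ga -sumrB; apply: eq_bigr => S _.
  by rewrite -walshMr walsh_set1 /da; case: (i \in S); ring.
have sum_da S : \sum_i da i S ^+ 2 = 4 * a S ^+ 2 * #|S|%:R.
  rewrite (bigID (mem S)) /= [X in _ + X]big1 => [|i /negPf iS]; last first.
    by rewrite /da iS expr0n.
  rewrite addr0 (eq_bigr (fun=> (2 * a S) ^+ 2)) => [|i iS]; last by rewrite /da iS.
  by rewrite sumr_const -[_ *+ #|S|]mulr_natr; ring.
under eq_bigr do under eq_bigr do rewrite dg.
under eq_bigr do rewrite parseval.
under [in X in _ <= X]eq_bigr do rewrite ga.
rewrite -mulr_sumr exchange_big parseval mulrCA ler_pM2l ?ltr0n ?expn_gt0 //.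
rewrite mulr_sumr; apply: ler_sum => S _; rewrite sum_da mulrAC.
have [SD | /a_deg ->] := leqP #|S| D; last by rewrite expr0n /= !(mulr0, mul0r).
by rewrite ler_wpM2r ?sqr_ge0 // ler_pM2l ?ltr0n // ler_nat.
Qed.

Lemma low_degree_mem (R : numFieldType) n (i : 'I_n) :
  low_degree 1 (fun X : {set 'I_n} => (i \in X)%:R : R).
Proof.
apply: (eq_low_degree (g := fun X => 2^-1 + - 2^-1 * walsh R [set i] X)) => [|X].
  apply/low_degreeD/low_degreeZ; first exact: low_degree_cst.
  by rewrite -(cards1 i); apply: low_degree_walsh.
by rewrite walshC walsh_set1; case: (i \in X) => /=; field.
Qed.

Section MultilinearOnCube.
Variables (R : realType) (n : nat).
Implicit Types (q : mlpoly R n) (S X M Z B : {set 'I_n}).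

(* A point of {0,1}^n is represented by the set of its coordinates equal to 1. *)
Definition mlfun q X := ml_eval q [ffun i => i \in X].

Lemma mlfunE q X : mlfun q X = \sum_S q S * (S \subset X)%:R.
Proof.
rewrite /mlfun /ml_eval; apply: eq_bigr => S _; rewrite -prod_nat_mem.
by congr (_ * _); apply: eq_bigr => i _; rewrite ffunE.
Qed.

Lemma low_degree_mlfun q d : deg_le q d -> low_degree d (mlfun q).
Proof.
move=> q_deg.
have mlfun_enum X : mlfun q X =
    \sum_(S <- enum {: {set 'I_n}}) q S * \prod_(i <- enum S) (i \in X)%:R.
  by rewrite mlfunE big_enum; apply: eq_bigr => S _; rewrite big_enum prod_nat_mem.
apply: (eq_low_degree _ (fun X => esym (mlfun_enum X))); apply: low_degree_sum => S.
have [-> | qS] := eqVneq (q S) 0.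
  by apply: (eq_low_degree (low_degree_cst d 0)) => X; rewrite mul0r.
apply/low_degreeZ/(low_degreeW _ (low_degree_prod (D := 1) _)) => [| i _].
  by rewrite mul1n -cardE q_deg.
exact: low_degree_mem.
Qed.

Definition sensitive q i := [set X | mlfun q X != mlfun q (symdiff X [set i])].

Definition maximal_support q M :=
  q M != 0 /\ forall S, q S != 0 -> M \subset S -> S = M.

Lemma exists_maximal_support q S : q S != 0 ->
  exists2 M, maximal_support q M & S \subset M.
Proof.
move=> qS; pose P M := (q M != 0) && (S \subset M).
have PS : P S by rewrite /P qS subxx.
case: (arg_maxnP (fun M : {set 'I_n} => #|M|) PS) => M /andP [qM SM] M_max.
exists M => //; split=> // S' qS' MS'; apply/eqP; rewrite eq_sym eqEcard MS' /=.
by apply: M_max; rewrite /P qS' (subset_trans SM MS').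
Qed.

Lemma alternating_sum_mlfun q M Z : maximal_support q M -> [disjoint Z & M] ->
  \sum_(B : {set 'I_n} | B \subset M) (-1) ^+ #|B| * mlfun q (Z :|: B) =
    (-1) ^+ #|M| * q M.
Proof.
move=> [_ M_max] ZM.
transitivity (\sum_S q S *
  \sum_(B : {set 'I_n} | B \subset M) (-1) ^+ #|B| * (S \subset Z :|: B)%:R).
  under eq_bigr do rewrite mlfunE mulr_sumr.
  rewrite exchange_big; apply: eq_bigr => S _; rewrite mulr_sumr.
  by apply: eq_bigr => B _; rewrite mulrCA.
under eq_bigr do rewrite sum_alternating_subsets //.
rewrite (bigD1 M) //= subxx subsetUr mulr1 big1 ?addr0 => [|S SneM]; first exact: mulrC.
case: ifP => MS; last by rewrite mulr0.
have [-> | /M_max/(_ MS) SM] := eqVneq (q S) 0; first by rewrite mul0r.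
by move: SneM; rewrite SM eqxx.
Qed.

Lemma sensitive_in_subcube q M i Z : maximal_support q M -> i \in M ->
  [disjoint Z & M] -> exists2 B : {set 'I_n}, B \subset M & Z :|: B \in sensitive q i.
Proof.
move=> M_max iM ZM; have iZ : i \notin Z by rewrite (disjointFl ZM iM).
case: (pickP (fun B : {set 'I_n} => (B \subset M) && (Z :|: B \in sensitive q i))).
  by move=> B /andP [BM sB]; exists B.
move=> insensitive; have [/negP qM _] := M_max; case: qM.
have := alternating_sum_mlfun M_max ZM.
pose flip_i B := symdiff B [set i].
rewrite (sum_eq0_antiinvolution (s := flip_i)) => [|B|B|B BM].
- by move/esym/eqP; rewrite mulf_eq0 signr_eq0.
- exact: symdiffKr.
- exact: symdiff1_subset.
move: (insensitive B); rewrite /= BM inE => /negbFE/eqP sB.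
by rewrite sign_symdiff1 setU_symdiff1 // -sB mulNr.
Qed.

Definition relevant q := [set i | [exists S, (q S != 0) && (i \in S)]].

Lemma card_sensitive_ge q d i : deg_le q d -> i \in relevant q ->
  (2 ^ n <= 2 ^ d * #|sensitive q i|)%N.
Proof.
move=> q_deg; rewrite inE => /existsP [S /andP [qS iS]].
have [M M_max SM] := exists_maximal_support qS.
have [qM _] := M_max; have iM : i \in M := subsetP SM i iS.
have cover : powerset (~: M) \subset [set X :\: M | X in sensitive q i].
  apply/subsetP => Z; rewrite inE -disjoints_subset => ZM.
  have [B BM sB] := sensitive_in_subcube M_max iM ZM.
  apply/imsetP; exists (Z :|: B) => //.
  by move: BM; rewrite -setD_eq0 setDUl (setDidPl ZM) => /eqP ->; rewrite setU0.
rewrite -{1}(card_ord n) -(cardsC M) expnD leq_mul ?leq_exp2l ?q_deg //.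
by rewrite -card_powerset (leq_trans (subset_leq_card cover)) ?leq_imset_card.
Qed.

Definition values q := undup [seq ml_eval q x | x <- enum {: {ffun 'I_n -> bool}}].

Lemma mlfun_values q X : mlfun q X \in values q.
Proof. by rewrite mem_undup; apply: map_f; rewrite mem_enum. Qed.

Definition level_poly q v X :=
  \prod_(u <- rem v (values q)) ((mlfun q X - u) / (v - u)).

Lemma level_polyE q v X : v \in values q -> level_poly q v X = (mlfun q X == v)%:R.
Proof.
move=> vq; rewrite /level_poly; have uq : uniq (values q) := undup_uniq _.
have [-> | qXv] := eqVneq (mlfun q X) v.
  rewrite big1_seq // => u /andP [_]; rewrite (mem_rem_uniq _ uq) inE => /andP [uv _].
  by rewrite divff // subr_eq0 eq_sym.
have qX_rem : mlfun q X \in rem v (values q).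
  by rewrite (mem_rem_uniq _ uq) inE qXv mlfun_values.
by rewrite (big_rem _ qX_rem) /= subrr !mul0r.
Qed.

Lemma low_degree_level_poly q d v : deg_le q d -> v \in values q ->
  low_degree (d * (num_values q).-1) (level_poly q v).
Proof.
move=> q_deg vq; rewrite -(size_rem vq); apply: low_degree_prod => u _.
apply: (eq_low_degree (g := fun X => (v - u)^-1 * mlfun q X + - (u / (v - u)))).
  exact/low_degreeD/low_degree_cst/low_degreeZ/low_degree_mlfun.
by move=> X; rewrite mulrBl mulrC.
Qed.

Lemma mlfun_neq_le q X Y : (mlfun q X != mlfun q Y)%:R <=
  \sum_(v <- values q) (level_poly q v X - level_poly q v Y) ^+ 2 :> R.
Proof.
have sum_ge0 s : 0 <= \sum_(v <- s) (level_poly q v X - level_poly q v Y) ^+ 2.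
  by apply: sumr_ge0 => v _; apply: sqr_ge0.
have [_ | qXY] := eqVneq; first exact: sum_ge0.
rewrite (big_rem _ (mlfun_values q X)) /= !level_polyE ?mlfun_values // eqxx.
by rewrite eq_sym (negPf qXY) subr0 expr1n lerDl.
Qed.

Lemma sum_card_sensitive_le q d : deg_le q d ->
  (\sum_i #|sensitive q i| <= 4 * d * num_values q * (num_values q).-1 * 2 ^ n)%N.
Proof.
move=> q_deg; set k := num_values q; rewrite -(ler_nat R) natr_sum.
have card_sensitive i : #|sensitive q i|%:R =
    \sum_X (mlfun q X != mlfun q (symdiff X [set i]))%:R :> R.
  rewrite -sum1_card natr_sum big_mkcond; apply: eq_bigr => X _.
  by rewrite inE; case: ifP.
under eq_bigr do rewrite card_sensitive.
apply: (le_trans (y := \sum_(v <- values q) \sum_i \sum_X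
    (level_poly q v X - level_poly q v (symdiff X [set i])) ^+ 2)).
  rewrite [leRHS]exchange_big; apply: ler_sum => i _; rewrite [leRHS]exchange_big.
  by apply: ler_sum => X _; apply: mlfun_neq_le.
apply: (le_trans (y := \sum_(v <- values q) 4 * (d * k.-1)%:R * (2 ^ n)%:R)).
  rewrite !big_seq; apply: ler_sum => v vq.
  apply: le_trans (total_influence_le (low_degree_level_poly q_deg vq)) _.
  rewrite ler_wpM2l ?mulr_ge0 // -card_set_ord -sumr_const ler_sum // => X _.
  by rewrite level_polyE //; case: eqP; rewrite ?expr1n ?expr0n.
rewrite big_const_seq count_predT iter_addr_0 -[_ *+ size _]mulr_natr !natrM.
by rewrite le_eqVlt -/(num_values q) -/k; apply/orP; left; apply/eqP; ring.
Qed.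

Lemma card_relevant_le q d : deg_le q d ->
  (#|relevant q| <= 2 ^ d * (4 * d * num_values q * (num_values q).-1))%N.
Proof.
move=> q_deg.
rewrite -(leq_pmul2r (expn_gt0 2 n)) -sum_nat_const -mulnA.
apply: (leq_trans (n := \sum_(i in relevant q) 2 ^ d * #|sensitive q i|)).
  by apply: leq_sum => i; apply: card_sensitive_ge.
rewrite -big_distrr leq_mul2l (leq_trans _ (sum_card_sensitive_le q_deg)) ?orbT //.
by rewrite [leqRHS](bigID (mem (relevant q))) leq_addr.
Qed.

Lemma sparsity_le q d : deg_le q d -> (sparsity q <= #|relevant q|.+1 ^ d)%N.
Proof.
move=> q_deg; apply: card_small_subsets_le => S; rewrite inE => qS.
split; last exact: q_deg.
by apply/subsetP => i iS; rewrite inE; apply/existsP; exists S; rewrite qS.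
Qed.

End MultilinearOnCube.

Lemma succ_expn_le_pow2 m k d : (0 < d)%N ->
  (m <= 2 ^ d * (4 * d * k * k.-1))%N -> (m.+1 ^ d <= 2 ^ (2 * d ^ 2 * (k + 2)))%N.
Proof.
move=> d_gt0 m_le; rewrite -!mulnA in m_le.
have pow2_gt n' : (n' < 2 ^ n')%N by apply: ltn_expl.
have dkk_lt : (d * (k * k.-1) < 2 ^ d * (2 ^ k * 2 ^ k))%N.
  by rewrite !ltn_mul // (leq_ltn_trans (leq_pred k)).
have m_lt : (m.+1 <= 2 ^ (2 + (d + d) + (k + k)))%N.
  have b_gt0 : (0 < 2 ^ d)%N by rewrite expn_gt0.
  rewrite !expnD; move: m_le dkk_lt b_gt0.
  set P := (d * _)%N; set b := (2 ^ d)%N; set a := (2 ^ k * 2 ^ k)%N => *; nia.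
apply: (@leq_trans ((2 ^ (2 + (d + d) + (k + k))) ^ d)); first by rewrite leq_exp2r.
by rewrite -expnM leq_exp2l //; nia.
Qed.

Lemma log2_natr_le (R : realType) (T E : nat) : (0 < T)%N -> (T <= 2 ^ E)%N ->
  log2 (T%:R : R) <= E%:R.
Proof.
move=> T_gt0 T_le; have ln2_gt0 : 0 < ln (2 : R) by rewrite ln_gt0 // ltr1n.
rewrite /log2 ler_pdivrMr // mulr_natl -lnXn // -natrX.
by rewrite ler_ln ?posrE ?ltr0n ?expn_gt0 // ler_nat.
Qed.

Unset Implicit Arguments.

Theorem lemma6p3 (R : realType) (n d : nat) (q : mlpoly R n) :
  (0 < d)%N -> (0 < sparsity q)%N -> deg_le q d ->
  (num_values q)%:R >=
    (2 * (d ^ 2)%:R)^-1 * log2 ((sparsity q)%:R : R) - 2 :> R.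
Proof.
move=> d_gt0 T_gt0 q_deg; set k := num_values q.
have T_le : (sparsity q <= 2 ^ (2 * d ^ 2 * (k + 2)))%N.
  exact: leq_trans (sparsity_le q_deg) (succ_expn_le_pow2 d_gt0 (card_relevant_le q_deg)).
have d2_gt0 : 0 < 2 * (d ^ 2)%:R :> R by rewrite mulr_gt0 // ltr0n expn_gt0 d_gt0.
rewrite lerBlDr mulrC ler_pdivrMr // (le_trans (log2_natr_le R T_gt0 T_le)) //.
by rewrite !natrM natrD mulrC.
Qed.
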